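(* Let $\langle X, \leq_1, \leq_2\rangle$ be a lattice frame, and let $L_X$ be the Urquhart complex algebra of $X$ (the complete bounded lattice of stable subsets of $X$). Let $X_{L_X}$ be the set of maximal filter–ideal pairs of $L_X$, ordered by $\leq_1$ and $\leq_2$ as in the Urquhart canonical frame. Then $X$ is embeddable into the Urquhart canonical frame $\langle X_{L_X}, \leq_1, \leq_2\rangle$: there is an injective map $k: X \to X_{L_X}$ such that for $i = 1,2$ and all $x,y \in X$, $x \leq_i y$ implies $k(x) \leq_i k(y)$.
   Context: A doubly ordered frame is a structure $\langle X, \leq_1, \leq_2\rangle$ where $\leq_1,\leq_2$ are quasiorders (reflexive and transitive relations) on $X$ such that $x \leq_1 y$ and $x \leq_2 y$ together imply $x = y$. Write $\uparrow_i x = \{y : x \leq_i y\}$. A lattice frame is a doubly ordered frame satisfying: (LF1) each element of $X$ is below a $\leq_1$-maximal element and below a $\leq_2$-maximal element; (LF2) if $x \not\leq_1 y$ then there is $z$ with $y \leq_1 z$ such that for all $w$, $x \leq_1 w$ implies $z \not\leq_2 w$; (LF3) if $x \not\leq_2 y$ then there is $z$ with $y \leq_2 z$ such that for all $w$, $x \leq_2 w$ implies $z \not\leq_1 w$. For $Y \subseteq X$ let $l(Y) = \{x : \uparrow_1 x \cap Y = \emptyset\}$ and $r(Y) = \{x : \uparrow_2 x \cap Y = \emptyset\}$. $Y$ is stable if $Y = l(r(Y))$; $L_X$ is the set of stable sets, with operations $Y \wedge Z = Y \cap Z$ and $Y \vee Z = l(r(Y \cup Z))$, bottom $\emptyset$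 and top $X$; this is a complete bounded lattice (the Urquhart complex algebra of $X$). For a bounded lattice $L$, a filter–ideal pair is $\langle F, I\rangle$ with $F$ a proper filter, $I$ a proper ideal, and $F \cap I = \emptyset$. It is maximal if no proper filter strictly containing $F$ is disjoint from $I$ and no proper ideal strictly containing $I$ is disjoint from $F$. For a maximal pair $x = \langle F, I\rangle$ write $x_1 = F$, $x_2 = I$. The Urquhart canonical frame of $L$ is $\langle X_L, \leq_1, \leq_2\rangle$, where $X_L$ is the set of maximal filter–ideal pairs and $x \leq_i y$ iff $x_i \subseteq y_i$. *)

From mathcomp Require Import all_boot.
From mathcomp Require Import boolp classical_sets.
Set Implicit Arguments. Unset Strict Implicit. Unset Printing Implicit Defensive.
Local Open Scope classical_set_scope.

Section Frames.
Variable X : Type.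
Variables le1 le2 : X -> X -> Prop.

Definition quasiorder (R : X -> X -> Prop) :=
  (forall x, R x x) /\ (forall x y z, R x y -> R y z -> R x z).

Definition doubly_ordered :=
  [/\ quasiorder le1, quasiorder le2 &
      forall x y, le1 x y -> le2 x y -> x = y].

Definition maximal (R : X -> X -> Prop) (m : X) := forall y, R m y -> R y m.

Definition up (R : X -> X -> Prop) (x : X) : set X := [set y | R x y].

Definition lattice_frame :=
  [/\ doubly_ordered,
      (forall x, (exists m, le1 x m /\ maximal le1 m) /\
                 (exists m, le2 x m /\ maximal le2 m)),
      (forall x y, ~ le1 x y ->
         exists z, le1 y z /\ forall w, le1 x w -> ~ le2 z w) &
      (forall x y, ~ le2 x y ->
         exists z, le2 y z /\ forall w, le2 x w -> ~ le1 z w)].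

Definition lop (Y : set X) : set X := [set x | up le1 x `&` Y = set0].
Definition rop (Y : set X) : set X := [set x | up le2 x `&` Y = set0].

Definition stable (Y : set X) := Y = lop (rop Y).

Record stable_set := StableSet { carrier : set X ; carrierP : stable carrier }.

Definition L_le (Y Z : stable_set) := carrier Y `<=` carrier Z.
Definition is_meet (Y Z W : stable_set) := carrier W = carrier Y `&` carrier Z.
Definition is_join (Y Z W : stable_set) :=
  carrier W = lop (rop (carrier Y `|` carrier Z)).

Definition L_filter (F : set stable_set) :=
  [/\ (exists Y, F Y),
      (forall Y Z, F Y -> L_le Y Z -> F Z) &
      (forall Y Z W, F Y -> F Z -> is_meet Y Z W -> F W)].

Definition L_ideal (I : set stable_set) :=
  [/\ (exists Y, I Y),
      (forall Y Z, I Y -> L_le Z Y -> I Z) &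
      (forall Y Z W, I Y -> I Z -> is_join Y Z W -> I W)].

Definition proper (S : set stable_set) := S <> setT.

Definition fi_pair (F I : set stable_set) :=
  [/\ L_filter F, proper F, L_ideal I, proper I & F `&` I = set0].

Definition maximal_fi_pair (F I : set stable_set) :=
  [/\ fi_pair F I,
      (forall F', L_filter F' -> proper F' -> F `<=` F' -> F' `&` I = set0 ->
          F' = F) &
      (forall I', L_ideal I' -> proper I' -> I `<=` I' -> F `&` I' = set0 ->
          I' = I)].

Record canon_point := CanonPoint {
  cp1 : set stable_set ; cp2 : set stable_set ;
  cpP : maximal_fi_pair cp1 cp2 }.

Definition canon_le1 (x y : canon_point) := cp1 x `<=` cp1 y.
Definition canon_le2 (x y : canon_point) := cp2 x `<=` cp2 y.

End Frames.

From mathcomp Require Import all_boot.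
From mathcomp Require Import boolp classical_sets.
Set Implicit Arguments. Unset Strict Implicit. Unset Printing Implicit Defensive.
Local Open Scope classical_set_scope.

(* Send x to the pair (F_x, I_x) with F_x = {Y | x \in Y} and
   I_x = {Y | x \in r(Y)}.  LF2 and LF3 say exactly that the principal cones
   up_1 x = l(r(up_1 x)) and r(l(up_2 x)) = up_2 x are Galois-closed, so
   up_1 x is a stable set in F_x and l(up_2 x) is a stable set in I_x.
   Any filter strictly above F_x then meets I_x (intersect with up_1 x), any
   ideal strictly above I_x meets F_x (join with l(up_2 x)), and the two
   cones recover x from (F_x, I_x) up to le1 and le2, hence up to equality. *)

Section Polarity.
Variable T : Type.

Definition upclosed (R : T -> T -> Prop) (A : set T) :=
  forall x y, A x -> R x y -> A y.

Lemma upclosed_up (R : T -> T -> Prop) x :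
  (forall x y z, R x y -> R y z -> R x z) -> upclosed R (up R x).
Proof. by move=> R_trans y z; apply: R_trans. Qed.

Lemma in_lop (R : T -> T -> Prop) (A : set T) x :
  lop R A x <-> forall y, R x y -> ~ A y.
Proof.
rewrite /lop /= -subset0; split=> [xA y xy Ay | xA y [xy Ay]].
- exact: (xA y).
- exact: (xA y xy).
Qed.

Lemma subset_lop (R : T -> T -> Prop) (A B : set T) :
  A `<=` B -> lop R B `<=` lop R A.
Proof. by move=> AB x /in_lop xB; apply/in_lop => y xy /AB; apply: xB. Qed.

Lemma upclosed_lop (R : T -> T -> Prop) (A : set T) :
  (forall x y z, R x y -> R y z -> R x z) -> upclosed R (lop R A).
Proof.
move=> R_trans x y /in_lop xA xy; apply/in_lop => z yz.
exact/xA/(R_trans _ _ _ xy yz).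
Qed.

Lemma sub_lop_lop (R S : T -> T -> Prop) (A : set T) :
  (forall x, S x x) -> upclosed R A -> A `<=` lop R (lop S A).
Proof.
move=> S_refl upA x Ax; apply/in_lop => y xy /in_lop yA.
exact: (yA y (S_refl y) (upA _ _ Ax xy)).
Qed.

Lemma lop_lop_lop (R S : T -> T -> Prop) (A : set T) :
  (forall x, R x x) -> (forall x y z, R x y -> R y z -> R x z) ->
  (forall x, S x x) -> upclosed S A ->
  lop R (lop S (lop R A)) = lop R A.
Proof.
move=> R_refl R_trans S_refl upA; rewrite eqEsubset; split.
- exact/subset_lop/sub_lop_lop.
- exact/sub_lop_lop/upclosed_lop.
Qed.

Lemma lop_lop_up (R S : T -> T -> Prop) x :
  (forall x y z, R x y -> R y z -> R x z) -> (forall x, S x x) ->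
  (forall x y, ~ R x y -> exists z, R y z /\ forall w, R x w -> ~ S z w) ->
  lop R (lop S (up R x)) = up R x.
Proof.
move=> R_trans S_refl separate; rewrite eqEsubset; split; last first.
  exact: sub_lop_lop S_refl (upclosed_up R_trans).
move=> y /in_lop yx; apply: contrapT => not_xy.
have [z [yz zx]] := separate _ _ not_xy.
by apply: (yx z yz); apply/in_lop => w zw xw; apply: (zx w xw zw).
Qed.

End Polarity.

Section LatticeFrame.
Variables (X : Type) (le1 le2 : X -> X -> Prop).
Hypotheses (le1_refl : forall x, le1 x x) (le2_refl : forall x, le2 x x).
Hypothesis le1_trans : forall x y z, le1 x y -> le1 y z -> le1 x z.
Hypothesis le2_trans : forall x y z, le2 x y -> le2 y z -> le2 x z.
Hypothesis le_anti : forall x y, le1 x y -> le2 x y -> x = y.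
Hypothesis LF2 : forall x y, ~ le1 x y ->
  exists z, le1 y z /\ forall w, le1 x w -> ~ le2 z w.
Hypothesis LF3 : forall x y, ~ le2 x y ->
  exists z, le2 y z /\ forall w, le2 x w -> ~ le1 z w.

Local Notation stable := (stable le1 le2).
Local Notation stable_set := (stable_set le1 le2).

Lemma ropE (A : set X) : rop le2 A = lop le2 A.
Proof. by []. Qed.

Lemma stable_lop (B : set X) : upclosed le2 B -> stable (lop le1 B).
Proof. by move=> upB; rewrite /stable ropE lop_lop_lop. Qed.

Definition stable_of (B : set X) (upB : upclosed le2 B) : stable_set :=
  StableSet (stable_lop upB).

Lemma upclosed_stable (Y : stable_set) : upclosed le1 (carrier Y).
Proof. by rewrite (carrierP Y); exact: upclosed_lop. Qed.

Lemma stable_setI (Y Z : stable_set) : stable (carrier Y `&` carrier Z).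
Proof.
have sub_lr (W : stable_set) : carrier Y `&` carrier Z `<=` carrier W ->
    lop le1 (rop le2 (carrier Y `&` carrier Z)) `<=` carrier W.
  by move=> sW; rewrite [X in _ `<=` X](carrierP W); exact/subset_lop/subset_lop.
rewrite /stable eqEsubset; split.
- apply: sub_lop_lop => // x y [Yx Zx] xy.
  by split; apply: upclosed_stable xy.
- by move=> x lrx; split; apply: (sub_lr _ _ x lrx) => y [].
Qed.

Lemma stable_up1 x : stable (up le1 x).
Proof. by rewrite /stable ropE lop_lop_up. Qed.

Lemma rop_lop_up2 x : rop le2 (lop le1 (up le2 x)) = up le2 x.
Proof. by rewrite ropE lop_lop_up. Qed.

Definition cone1 x : stable_set := StableSet (stable_up1 x).
Definition cone2 x : stable_set := @stable_of (up le2 x) (upclosed_up le2_trans).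

Definition point_filter x : set stable_set := [set Y | carrier Y x].
Definition point_ideal x : set stable_set := [set Y | rop le2 (carrier Y) x].

Lemma point_filter_cone1 x : point_filter x (cone1 x).
Proof. exact: le1_refl. Qed.

Lemma point_ideal_cone2 x : point_ideal x (cone2 x).
Proof. by rewrite /point_ideal /= rop_lop_up2. Qed.

Lemma point_filter_ideal_disjoint x : point_filter x `&` point_ideal x = set0.
Proof.
by rewrite -subset0 => Y [Yx /in_lop xY]; apply: (xY x (le2_refl x)).
Qed.

Lemma point_ideal_cone1 x : ~ point_ideal x (cone1 x).
Proof.
move=> Ix; have : (point_filter x `&` point_ideal x) (cone1 x).
  by split; first exact: point_filter_cone1.
by rewrite point_filter_ideal_disjoint.
Qed.

Lemma point_filter_cone2 x : ~ point_filter x (cone2 x).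
Proof.
move=> Fx; have : (point_filter x `&` point_ideal x) (cone2 x).
  by split; last exact: point_ideal_cone2.
by rewrite point_filter_ideal_disjoint.
Qed.

Lemma point_filterP x : L_filter (point_filter x).
Proof.
split; first by exists (cone1 x); exact: point_filter_cone1.
- by move=> Y Z Yx YZ; apply: YZ.
- by move=> Y Z W Yx Zx; rewrite /point_filter /is_meet /= => ->.
Qed.

Lemma point_idealP x : L_ideal (point_ideal x).
Proof.
split; first by exists (cone2 x); exact: point_ideal_cone2.
- by move=> Y Z; rewrite /point_ideal /= => xY ZY; apply: subset_lop xY.
move=> Y Z W xY xZ; rewrite /point_ideal /is_join /= => ->.
have xYZ : rop le2 (carrier Y `|` carrier Z) x.
  by apply/in_lop => y xy [|]; [move: xY | move: xZ] => /in_lop /(_ y xy).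
by rewrite ropE; apply: sub_lop_lop xYZ => //; exact: upclosed_lop.
Qed.

Lemma point_fi_pair x : fi_pair (point_filter x) (point_ideal x).
Proof.
split; [exact: point_filterP | | exact: point_idealP | |].
- by move=> Fx; apply: (@point_filter_cone2 x); rewrite Fx.
- by move=> Ix; apply: (@point_ideal_cone1 x); rewrite Ix.
- exact: point_filter_ideal_disjoint.
Qed.

Lemma point_filter_maximal x (F : set stable_set) :
  L_filter F -> point_filter x `<=` F -> F `&` point_ideal x = set0 ->
  F = point_filter x.
Proof.
case=> _ _ F_meet sF dF; rewrite eqEsubset; split=> // Y FY.
apply: contrapT => Yx; pose W := StableSet (stable_setI Y (cone1 x)).
have : (F `&` point_ideal x) W.
  split; first exact: F_meet FY (sF _ (point_filter_cone1 x)) _.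
  apply/in_lop => y xy [Yy /= x1y].
  by apply: Yx; rewrite (le_anti x1y xy).
by rewrite dF.
Qed.

Lemma point_ideal_maximal x (I : set stable_set) :
  L_ideal I -> point_ideal x `<=` I -> point_filter x `&` I = set0 ->
  I = point_ideal x.
Proof.
case=> _ _ I_join sI dI; rewrite eqEsubset; split=> // Y IY.
apply: contrapT => xY.
have [u [xu Yu]] : exists u, le2 x u /\ carrier Y u.
  by apply: contrapT => noU; apply/xY/in_lop => u xu Yu; apply: noU; exists u.
pose J := stable_of (@upclosed_lop _ _ (carrier Y `|` carrier (cone2 x)) le2_trans).
have : (point_filter x `&` I) J.
  split; last exact: I_join IY (sI _ (point_ideal_cone2 x)) _.
  apply/in_lop => y xy yJ.
  have x2y : le2 x y.
    by rewrite -[le2 x]/(up le2 x) -rop_lop_up2; apply: subset_lop yJ; right.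
  move: yJ; rewrite -(le_anti xy x2y) => /in_lop xJ.
  exact: (xJ u xu (or_introl Yu)).
by rewrite dI.
Qed.

Lemma point_maximal_fi_pair x :
  maximal_fi_pair (point_filter x) (point_ideal x).
Proof.
split; first exact: point_fi_pair.
- by move=> F FP _; apply: point_filter_maximal.
- by move=> I IP _; apply: point_ideal_maximal.
Qed.

Definition canon_embed x : canon_point le1 le2 :=
  CanonPoint (point_maximal_fi_pair x).

Lemma canon_embed_le1 x y : le1 x y -> canon_le1 (canon_embed x) (canon_embed y).
Proof. by move=> xy Y Yx; apply: upclosed_stable xy. Qed.

Lemma canon_embed_le2 x y : le2 x y -> canon_le2 (canon_embed x) (canon_embed y).
Proof.
by move=> xy Y /in_lop xY; apply/in_lop => z yz; apply/xY/(le2_trans xy yz).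
Qed.

Lemma canon_embed_inj : injective canon_embed.
Proof.
move=> x y exy.
have Fxy : point_filter x = point_filter y by exact: (congr1 (@cp1 _ _ _) exy).
have Ixy : point_ideal x = point_ideal y by exact: (congr1 (@cp2 _ _ _) exy).
apply: le_anti.
- by have := point_filter_cone1 x; rewrite Fxy.
- by have := point_ideal_cone2 x; rewrite Ixy /point_ideal /= rop_lop_up2.
Qed.

End LatticeFrame.

Theorem mainTheorem1 (X : Type) (le1 le2 : X -> X -> Prop) :
  lattice_frame le1 le2 ->
  exists k : X -> canon_point le1 le2,
    injective k /\
    (forall x y, le1 x y -> canon_le1 (k x) (k y)) /\
    (forall x y, le2 x y -> canon_le2 (k x) (k y)).
Proof.
case=> -[[le1_refl le1_trans] [le2_refl le2_trans] le_anti] _ LF2 LF3.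
exists (canon_embed le1_refl le2_refl le1_trans le2_trans le_anti LF2 LF3).
split; first exact: canon_embed_inj.
by split; [exact: canon_embed_le1 | exact: canon_embed_le2].
Qed.
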